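(* Let $d\ge0$, $s,m\ge1$, and let $\mathbf{M}_0\in\mathbb{Z}^{s\times m}$ be an integer matrix such that $\bm{u}\mapsto\mathbf{M}_0\bm{u}$ is injective on $\{0,1\}^m$. Let $\mathbf{P}=\mathbf{H}_{2^d}\otimes\mathbf{M}_0$ and let $\mathbf{Q}^1,\mathbf{Q}^2$ be real matrices with $\mathbf{Q}^1-\mathbf{Q}^2=\mathbf{P}$, and $\mathbf{Q}=\begin{bmatrix}\mathbf{Q}^1\\ \mathbf{Q}^2\end{bmatrix}$. Let $\bm{x}=(\bm{x}_1,\dots,\bm{x}_{2^d})\in\{0,1\}^{2^dm}$ (blocks $\bm{x}_i\in\{0,1\}^m$), $\bm{n}'\in\mathbb{R}^{2^{d+1}s}$ and $\bm{y}'=\mathbf{Q}\bm{x}+\bm{n}'$. Consider the decoder: (1) compute $\bm{y}=\bm{y}'_u-\bm{y}'_l$ (upper half minus lower half of $\bm{y}'$); (2) compute $T_d(\bm{y})$ and split it into consecutive blocks $\bm{w}_1,\dots,\bm{w}_{2^d}\in\mathbb{R}^s$; (3) round each entry of each $\bm{w}_i$ to a nearest integer, obtaining $\tilde{\bm{w}}_i$; if $\tilde{\bm{w}}_i=\mathbf{M}_0\bm{u}$ for some (necessarily unique) $\bm{u}\in\{0,1\}^m$ output $\hat{\bm{x}}_i=\bm{u}$, otherwise output an arbitrary $\hat{\bm{x}}_i\in\{0,1\}^m$. Then the number of indices $i$ with $\hat{\bm{x}}_i\neq\bm{x}_i$ is at most $4\cdot 2^{-d}\lVert\bm{y}-\mathbf{P}\bm{x}\rVert_2^2\le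 8\cdot2^{-d}\lVert\bm{n}'\rVert_2^2$; in particular $\hat{\bm{x}}=(\hat{\bm{x}}_1,\dots,\hat{\bm{x}}_{2^d})$ differs from $\bm{x}$ in at most $8m\,2^{-d}\lVert\bm{n}'\rVert_2^2$ coordinates.
   Context: $\mathbf{H}_{2^d}$ is the Sylvester-type Hadamard matrix: $\mathbf{H}_1=[1]$, $\mathbf{H}_{2k}=\begin{bmatrix}\mathbf{H}_k&\mathbf{H}_k\\ \mathbf{H}_k&-\mathbf{H}_k\end{bmatrix}$; $\otimes$ is the Kronecker product. The map $T_d:\mathbb{R}^{2^ds}\to\mathbb{R}^{2^ds}$ is defined recursively by $T_0(\bm{v})=\bm{v}$ and, for $d\ge1$, with $\bm{v}=(\bm{v}_u,\bm{v}_l)$ split into upper and lower halves, $T_d(\bm{v})=\big(T_{d-1}(\tfrac{\bm{v}_u+\bm{v}_l}{2}),T_{d-1}(\tfrac{\bm{v}_u-\bm{v}_l}{2})\big)$. *)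

From HB Require Import structures.
From mathcomp Require Import all_boot all_order all_algebra.
From mathcomp Require Export mxtens.
From mathcomp Require Import reals.
Set Implicit Arguments. Unset Strict Implicit. Unset Printing Implicit Defensive.
Import Order.TTheory GRing.Theory Num.Theory.
Local Open Scope ring_scope.

Lemma pow2S d : (2 ^ d.+1 = 2 ^ d + 2 ^ d)%N.
Proof. by rewrite expnS mul2n addnn. Qed.

Lemma pow2S_mul d s : (2 ^ d.+1 * s = 2 ^ d * s + 2 ^ d * s)%N.
Proof. by rewrite pow2S mulnDl. Qed.

Fixpoint hadamard (R : pzRingType) (d : nat) : 'M[R]_(2 ^ d) :=
  match d as d0 return 'M[R]_(2 ^ d0) with
  | 0 => 1%:M
  | d'.+1 =>
      let H := hadamard R d' in
      castmx (esym (pow2S d'), esym (pow2S d')) (block_mx H H H (- H))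
  end.

Fixpoint Tmap (R : fieldType) (s d : nat) : 'cV[R]_(2 ^ d * s) -> 'cV[R]_(2 ^ d * s) :=
  match d as d0 return 'cV[R]_(2 ^ d0 * s) -> 'cV[R]_(2 ^ d0 * s) with
  | 0 => fun v => v
  | d'.+1 => fun v =>
      let v' := castmx (pow2S_mul d' s, erefl 1%N) v in
      castmx (esym (pow2S_mul d' s), erefl 1%N)
        (col_mx (Tmap (2%:R^-1 *: (usubmx v' + dsubmx v')))
                (Tmap (2%:R^-1 *: (usubmx v' - dsubmx v'))))
  end.

(* The i-th block (entries i*k, ..., i*k + k - 1) of a vector of length n*k. *)
Definition blockv (T : Type) (n k : nat) (v : 'cV[T]_(n * k)) (i : 'I_n) : 'cV[T]_k :=
  \col_j v (mxtens_index (i, j)) 0.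

Definition bvec (R : pzSemiRingType) (n : nat) (u : 'cV[bool]_n) : 'cV[R]_n :=
  map_mx (fun b : bool => (b%:R : R)) u.

Definition sqnorm (R : pzSemiRingType) (n : nat) (v : 'cV[R]_n) : R :=
  \sum_(i < n) v i 0 ^+ 2.

Arguments bvec {R n} u.
Arguments Tmap {R s d} _.
Arguments blockv {T n k} v i.
Arguments sqnorm {R n} v.

From HB Require Import structures.
From mathcomp Require Import all_boot all_order all_algebra.
From mathcomp Require Import mxtens ring lra.
From mathcomp Require Import reals.
Set Implicit Arguments. Unset Strict Implicit. Unset Printing Implicit Defensive.
Import Order.TTheory GRing.Theory Num.Theory.
Local Open Scope ring_scope.

(* Since Q^1 - Q^2 = P = H_{2^d} (x) M0, the difference
   y = y'_u - y'_l equals P x + e with e = n'_u - n'_l, and ||e||^2 <= 2||n'||^2.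
   The map T_d is linear, it undoes P blockwise (the i-th block of T_d(P x) is
   M0 x_i), and it is a scaled isometry: 2^d ||T_d v||^2 = ||v||^2.  Hence the
   i-th block of T_d y is w_i = M0 x_i + E_i with sum_i ||E_i||^2 = 2^-d ||e||^2.
   If ||E_i||^2 < 1/4, every entry of w_i lies within 1/2 of the integer vector
   M0 x_i, so rounding recovers M0 x_i and the decoder outputs x_i.  A wrong
   block therefore has ||E_i||^2 >= 1/4, and counting such blocks (Markov's
   inequality) gives the bound 4 * 2^-d ||e||^2; a wrong block contributes at
   most m wrong coordinates.  (Injectivity of M0 only makes the decoder well
   defined; the bound does not use it.) *)

Lemma ord_add_ind n1 n2 (P : 'I_(n1 + n2) -> Prop) :
  (forall i, P (lshift _ i)) -> (forall i, P (rshift _ i)) -> forall i, P i.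
Proof. by move=> Pl Pr i; rewrite -(splitK i); case: (split i). Qed.

Definition lo d (i : 'I_(2 ^ d)) : 'I_(2 ^ d.+1) :=
  cast_ord (esym (pow2S d)) (lshift (2 ^ d) i).
Definition hi d (i : 'I_(2 ^ d)) : 'I_(2 ^ d.+1) :=
  cast_ord (esym (pow2S d)) (rshift (2 ^ d) i).

Lemma lo_hi_ind d (P : 'I_(2 ^ d.+1) -> Prop) :
  (forall i, P (lo i)) -> (forall i, P (hi i)) -> forall i, P i.
Proof.
move=> Plo Phi i.
have -> : i = cast_ord (esym (pow2S d)) (cast_ord (pow2S d) i) by apply: val_inj.
by elim/ord_add_ind: (cast_ord (pow2S d) i) => k; [exact: Plo | exact: Phi].
Qed.

Lemma lo_idx d s (i : 'I_(2 ^ d)) (j : 'I_s) :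
  cast_ord (esym (pow2S_mul d s)) (lshift _ (mxtens_index (i, j)))
  = mxtens_index (lo i, j).
Proof. by apply: val_inj. Qed.

Lemma hi_idx d s (i : 'I_(2 ^ d)) (j : 'I_s) :
  cast_ord (esym (pow2S_mul d s)) (rshift _ (mxtens_index (i, j)))
  = mxtens_index (hi i, j).
Proof. by apply: val_inj => /=; rewrite mulnDl addnA. Qed.

Lemma lo_cast d (i : 'I_(2 ^ d)) : cast_ord (pow2S d) (lo i) = lshift _ i.
Proof. by apply: val_inj. Qed.

Lemma hi_cast d (i : 'I_(2 ^ d)) : cast_ord (pow2S d) (hi i) = rshift _ i.
Proof. by apply: val_inj. Qed.

Lemma big_tens (T : Type) (idx : T) (op : Monoid.com_law idx) a b
    (F : 'I_(a * b) -> T) :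
  \big[op/idx]_(k < a * b) F k
  = \big[op/idx]_(i < a) \big[op/idx]_(j < b) F (mxtens_index (i, j)).
Proof.
rewrite pair_bigA /= (reindex (@mxtens_index a b)) /=; first by apply: eq_bigr => -[].
by exists (@mxtens_unindex a b) => k _; rewrite (mxtens_indexK, mxtens_unindexK).
Qed.

Lemma blockv_lo (T : Type) d s (A B : 'cV[T]_(2 ^ d * s)) i :
  blockv (castmx (esym (pow2S_mul d s), erefl 1%N) (col_mx A B)) (lo i)
  = blockv A i.
Proof.
apply/matrixP => j l; rewrite !mxE castmxE /= cast_ord_id -lo_idx.
by rewrite cast_ordK col_mxEu.
Qed.

Lemma blockv_hi (T : Type) d s (A B : 'cV[T]_(2 ^ d * s)) i :
  blockv (castmx (esym (pow2S_mul d s), erefl 1%N) (col_mx A B)) (hi i)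
  = blockv B i.
Proof.
apply/matrixP => j l; rewrite !mxE castmxE /= cast_ord_id -hi_idx.
by rewrite cast_ordK col_mxEd.
Qed.

Lemma blockv_usub (T : Type) d s (v : 'cV[T]_(2 ^ d.+1 * s)) i :
  blockv (usubmx (castmx (pow2S_mul d s, erefl 1%N) v)) i = blockv v (lo i).
Proof. by apply/matrixP => j l; rewrite !mxE castmxE /= cast_ord_id lo_idx. Qed.

Lemma blockv_dsub (T : Type) d s (v : 'cV[T]_(2 ^ d.+1 * s)) i :
  blockv (dsubmx (castmx (pow2S_mul d s, erefl 1%N) v)) i = blockv v (hi i).
Proof. by apply/matrixP => j l; rewrite !mxE castmxE /= cast_ord_id hi_idx. Qed.

Lemma blockvD (R : pzRingType) n k (a b : 'cV[R]_(n * k)) i :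
  blockv (a + b) i = blockv a i + blockv b i.
Proof. by apply/matrixP => j l; rewrite !mxE. Qed.

Lemma blockv_map (T U : Type) (f : T -> U) n k (v : 'cV[T]_(n * k)) i :
  blockv (map_mx f v) i = map_mx f (blockv v i).
Proof. by apply/matrixP => j l; rewrite !mxE. Qed.

Lemma castmxD (R : pzRingType) n n' (e : n = n') (a b : 'cV[R]_n) :
  castmx (e, erefl 1%N) (a + b)
  = castmx (e, erefl 1%N) a + castmx (e, erefl 1%N) b.
Proof. by case: n' / e; rewrite !castmx_id. Qed.

Lemma castmx_mulmx (R : pzRingType) m m' n n' p (em : m = m') (en : n = n')
    (M : 'M[R]_(m, n)) (N : 'M[R]_(n, p)) :
  castmx (em, erefl p) (M *m N) = castmx (em, en) M *m castmx (en, erefl p) N.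
Proof. by case: m' / em; case: n' / en; rewrite !castmx_id. Qed.

Lemma sqnorm_cast (R : pzRingType) n n' (e : n = n') (a : 'cV[R]_n) :
  sqnorm (castmx (e, erefl 1%N) a) = sqnorm a.
Proof. by case: n' / e; rewrite castmx_id. Qed.

Lemma sqnorm_col (R : pzRingType) n1 n2 (a : 'cV[R]_n1) (b : 'cV[R]_n2) :
  sqnorm (col_mx a b) = sqnorm a + sqnorm b.
Proof.
by rewrite /sqnorm big_split_ord; congr (_ + _); apply: eq_bigr => i _;
   rewrite (col_mxEu, col_mxEd).
Qed.

Lemma sqnorm_blocks (R : pzRingType) n k (a : 'cV[R]_(n * k)) :
  sqnorm a = \sum_(i < n) sqnorm (blockv a i).
Proof.
by rewrite /sqnorm big_tens; apply: eq_bigr => i _; apply: eq_bigr => j _;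
   rewrite mxE.
Qed.

Lemma sqnorm_ge0 (R : realDomainType) n (v : 'cV[R]_n) : 0 <= sqnorm v.
Proof. by apply: sumr_ge0 => j _; apply: sqr_ge0. Qed.

Lemma sqnorm_ge_entry (R : realDomainType) n (v : 'cV[R]_n) j :
  v j 0 ^+ 2 <= sqnorm v.
Proof.
rewrite /sqnorm (bigD1 j) //= lerDl.
by apply: sumr_ge0 => k _; apply: sqr_ge0.
Qed.

(* Parallelogram law, in the form produced by one step of T_d. *)
Lemma sqnorm_par (F : numFieldType) n (a b : 'cV[F]_n) :
  2 * (sqnorm (2^-1 *: (a + b)) + sqnorm (2^-1 *: (a - b)))
  = sqnorm a + sqnorm b.
Proof.
rewrite /sqnorm -!big_split mulr_sumr; apply: eq_bigr => i _ /=; rewrite !mxE.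
by field.
Qed.

Lemma sqnorm_halves_diff (R : realDomainType) k (v : 'cV[R]_(k + k)) :
  sqnorm (usubmx v - dsubmx v) <= 2 * sqnorm v.
Proof.
have sq_diff (a b : R) : (a - b) ^+ 2 <= 2 * a ^+ 2 + 2 * b ^+ 2.
  rewrite -subr_ge0.
  have -> : 2 * a ^+ 2 + 2 * b ^+ 2 - (a - b) ^+ 2 = (a + b) ^+ 2 by ring.
  exact: sqr_ge0.
rewrite -[v in 2 * sqnorm v]vsubmxK sqnorm_col /sqnorm mulrDr !mulr_sumr.
by rewrite -big_split; apply: ler_sum => i _; rewrite !mxE sq_diff.
Qed.

Lemma TmapS (F : fieldType) s d (v : 'cV[F]_(2 ^ d.+1 * s)) :
  let v' := castmx (pow2S_mul d s, erefl 1%N) v in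
  Tmap v = castmx (esym (pow2S_mul d s), erefl 1%N)
    (col_mx (Tmap (2^-1 *: (usubmx v' + dsubmx v')))
            (Tmap (2^-1 *: (usubmx v' - dsubmx v')))).
Proof. by []. Qed.

Lemma hadamardS (R : pzRingType) d :
  hadamard R d.+1 = castmx (esym (pow2S d), esym (pow2S d))
    (block_mx (hadamard R d) (hadamard R d) (hadamard R d) (- hadamard R d)).
Proof. by []. Qed.

Lemma hadamard_tensS (R : pzRingType) d s m (N : 'M[R]_(s, m)) :
  castmx (pow2S_mul d s, pow2S_mul d m) (hadamard R d.+1 *t N) =
  block_mx (hadamard R d *t N) (hadamard R d *t N)
           (hadamard R d *t N) (- (hadamard R d *t N)).
Proof.
apply/matrixP => a b; rewrite castmxE.
elim/ord_add_ind: a => a; case: (mxtens_indexP a) => i j;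
elim/ord_add_ind: b => b; case: (mxtens_indexP b) => k l;
rewrite ?lo_idx ?hi_idx ?block_mxEul ?block_mxEur ?block_mxEdl ?block_mxEdr
  !tensmxE hadamardS castmxE /= ?esymK ?lo_cast ?hi_cast
  ?block_mxEul ?block_mxEur ?block_mxEdl ?block_mxEdr //.
by rewrite [RHS]mxE tensmxE mxE mulNr.
Qed.

Lemma TmapD (F : fieldType) s d (a b : 'cV[F]_(2 ^ d * s)) :
  Tmap (a + b) = Tmap a + Tmap b.
Proof.
elim: d a b => [//|d IH] a b.
rewrite !TmapS castmxD !raddfD /= -castmxD add_col_mx -!IH.
by congr (castmx _ (col_mx (Tmap _) (Tmap _))); rewrite addrACA.
Qed.

Lemma Tmap_sqnorm (F : numFieldType) s d (v : 'cV[F]_(2 ^ d * s)) :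
  2 ^+ d * sqnorm (Tmap v) = sqnorm v.
Proof.
elim: d v => [|d IH] v; first by rewrite expr0 mul1r.
rewrite TmapS sqnorm_cast sqnorm_col exprS -mulrA mulrDr !IH sqnorm_par.
by rewrite -sqnorm_col vsubmxK sqnorm_cast.
Qed.

Lemma Tmap_hadamard (F : numFieldType) d s m (N : 'M[F]_(s, m))
    (x : 'cV[F]_(2 ^ d * m)) i :
  blockv (Tmap ((hadamard F d *t N) *m x)) i = N *m blockv x i.
Proof.
elim: d x i => [|d IH] x i.
  apply/matrixP => j l; rewrite [l]ord1 [i]ord1 !mxE big_tens big_ord1.
  by apply: eq_bigr => k _; rewrite tensmxE !mxE mul1r.
rewrite TmapS (castmx_mulmx _ (pow2S_mul d m)) hadamard_tensS.
rewrite -[castmx (pow2S_mul d m, _) x]vsubmxK mul_block_col col_mxKu col_mxKd.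
set xu := usubmx _; set xl := dsubmx _; set P := hadamard F d *t N.
have halve (a : 'cV[F]_(2 ^ d * s)) : 2^-1 *: (a *+ 2) = a.
  by rewrite -scaler_nat scalerA mulVf ?pnatr_eq0 // scale1r.
have -> : P *m xu + P *m xl + (P *m xu + - P *m xl) = (P *m xu) *+ 2.
  by rewrite mulNmx addrACA subrr addr0.
have -> : P *m xu + P *m xl - (P *m xu + - P *m xl) = (P *m xl) *+ 2.
  by rewrite mulNmx opprD opprK addrACA subrr add0r.
rewrite !halve; elim/lo_hi_ind: i => i.
- by rewrite blockv_lo IH blockv_usub.
- by rewrite blockv_hi IH blockv_dsub.
Qed.

Lemma intmx_mul_bvec (R : comPzRingType) s m (M : 'M[int]_(s, m))
    (u : 'cV[bool]_m) :
  map_mx (fun z : int => (z%:~R : R)) (M *m bvec u)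
  = map_mx (fun z : int => (z%:~R : R)) M *m bvec u.
Proof.
rewrite map_mxM; congr (_ *m _).
by apply/matrixP => i j; rewrite !mxE; case: (u i j).
Qed.

Lemma nearest_int_eq (R : realFieldType) (a z : int) (t : R) :
  `|z%:~R - t| <= `|a%:~R - t| -> `|a%:~R - t| < 2^-1 -> z = a.
Proof.
move=> hz ha; have hza : `|((z - a)%:~R : R)| < 1.
  have -> : ((z - a)%:~R : R) = (z%:~R - t) - (a%:~R - t) by rewrite intrB; ring.
  by apply: le_lt_trans (ler_normB _ _) _; lra.
by apply/eqP; rewrite -subr_eq0 -normr_le0 -ltz1D addr0 -(ltrz1 R) intr_norm.
Qed.

Lemma round_intvec (R : realFieldType) s (a z : 'cV[int]_s) (v : 'cV[R]_s) :
  (forall j (c : int), `|(z j 0)%:~R - v j 0| <= `|c%:~R - v j 0|) ->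
  sqnorm (v - map_mx (fun c : int => (c%:~R : R)) a) < 4^-1 -> z = a.
Proof.
move=> hz hv; apply/matrixP => j l; rewrite [l]ord1.
apply: nearest_int_eq (hz j _) _.
have := le_lt_trans (sqnorm_ge_entry _ j) hv; rewrite !mxE.
by rewrite -normrN opprB ltr_norml; move: (v j 0 - _) => r hr; apply/andP; split; nra.
Qed.

Lemma card_mul_le_sum (R : numDomainType) (I : finType) (S : {set I})
    (f : I -> R) (c : R) :
  (forall i, 0 <= f i) -> (forall i, i \in S -> c <= f i) ->
  #|S|%:R * c <= \sum_i f i.
Proof.
move=> f_ge0 f_geS; rewrite -sum1_card natr_sum mulr_suml.
rewrite [leRHS](bigID (mem S)) /= -[leLHS]addr0 lerD //; last exact: sumr_ge0.
by apply: ler_sum => i iS; rewrite mul1r f_geS.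
Qed.

Lemma card_diff_le_blocks (T : eqType) n k (a b : 'cV[T]_(n * k)) :
  leq #|[set j | a j 0 != b j 0]| (k * #|[set i | blockv a i != blockv b i]|).
Proof.
rewrite -!sum1_card big_mkcond big_tens big_distrr [leqRHS]big_mkcond /=.
apply: leq_sum => i _; rewrite inE muln1.
case: eqP => [hab|_].
  rewrite big1 // => j _; rewrite inE.
  by have := congr1 (fun v : 'cV_k => v j 0) hab; rewrite !mxE => ->; rewrite eqxx.
by rewrite -[k in (_ <= k)%N]card_ord -sum1_card leq_sum // => j _; case: ifP.
Qed.

Unset Implicit Arguments.
Theorem mainTheorem4 (R : realType) (d s m : nat) (hs : (0 < s)%N) (hm : (0 < m)%N)
  (M0 : 'M[int]_(s, m))
  (hinj : forall u v : 'cV[bool]_m, M0 *m bvec u = M0 *m bvec v -> u = v)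
  (Q1 Q2 : 'M[R]_(2 ^ d * s, 2 ^ d * m))
  (hQ : Q1 - Q2 = hadamard R d *t map_mx (fun z : int => (z%:~R : R)) M0)
  (x : 'cV[bool]_(2 ^ d * m)) (n' : 'cV[R]_(2 ^ d * s + 2 ^ d * s))
  (wt : 'I_(2 ^ d) -> 'cV[int]_s) (xhat : 'cV[bool]_(2 ^ d * m)) :
  let P := hadamard R d *t map_mx (fun z : int => (z%:~R : R)) M0 in
  let y' := col_mx Q1 Q2 *m bvec x + n' in
  let y := usubmx y' - dsubmx y' in
  let w := blockv (Tmap y) in
  (* step (3a): each entry of wt i is a nearest integer to the entry of w i *)
  (forall (i : 'I_(2 ^ d)) (j : 'I_s) (z : int),
      `|(wt i j 0)%:~R - w i j 0| <= `|z%:~R - w i j 0|) ->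
  (* step (3b): if wt i = M0 u with u binary, the output block is u (else arbitrary) *)
  (forall (i : 'I_(2 ^ d)) (u : 'cV[bool]_m), wt i = M0 *m bvec u -> blockv xhat i = u) ->
  [/\ (#|[set i : 'I_(2 ^ d) | blockv xhat i != blockv x i]|%:R : R)
        <= 4 / 2 ^+ d * sqnorm (y - P *m bvec x),
      4 / 2 ^+ d * sqnorm (y - P *m bvec x) <= 8 / 2 ^+ d * sqnorm n'
    & (#|[set j : 'I_(2 ^ d * m) | xhat j 0 != x j 0]|%:R : R)
        <= 8 * m%:R / 2 ^+ d * sqnorm n'].
Proof.
move=> P y' y w hround hdec.
set e := usubmx n' - dsubmx n'; set E := blockv (Tmap e).
set S := [set i : 'I_(2 ^ d) | blockv xhat i != blockv x i].
have hye : y - P *m bvec x = e.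
  rewrite /y /y' !raddfD /= mul_col_mx col_mxKu col_mxKd /P -hQ mulmxBl.
  by rewrite addrACA [LHS]addrC addKr.
have hw i : w i - map_mx (fun z : int => (z%:~R : R)) (M0 *m bvec (blockv x i)) = E i.
  rewrite /w -[y](subrK (P *m bvec x)) hye TmapD blockvD Tmap_hadamard.
  by rewrite /bvec blockv_map -/(bvec _) intmx_mul_bvec addrK.
have hgood i : sqnorm (E i) < 4^-1 -> blockv xhat i = blockv x i.
  by move=> hE; apply/hdec/(round_intvec (hround i)); rewrite hw.
(* Wrong blocks carry error energy >= 1/4, and T_d scales energy by 2^-d. *)
have hbad : #|S|%:R * 4^-1 <= \sum_i sqnorm (E i).
  apply: card_mul_le_sum => i; first exact: sqnorm_ge0.
  by rewrite inE leNgt; apply: contra => /hgood ->.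
have hTe : 2 ^+ d * \sum_i sqnorm (E i) = sqnorm e.
  by rewrite -sqnorm_blocks Tmap_sqnorm.
have h2d : 0 < (2 ^+ d : R) by rewrite exprn_gt0.
have hblocks : #|S|%:R <= 4 / 2 ^+ d * sqnorm e.
  by rewrite -hTe mulrA divfK ?gt_eqF //; lra.
have hnoise : 4 / 2 ^+ d * sqnorm e <= 8 / 2 ^+ d * sqnorm n'.
  have -> : 8 / 2 ^+ d * sqnorm n' = 4 / 2 ^+ d * (2 * sqnorm n') by ring.
  by rewrite ler_wpM2l ?sqnorm_halves_diff // divr_ge0 // ltW.
rewrite hye; split => //.
have -> : 8 * m%:R / 2 ^+ d * sqnorm n' = m%:R * (8 / 2 ^+ d * sqnorm n') by ring.
apply: le_trans (_ : m%:R * #|S|%:R <= _).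
  by rewrite -natrM ler_nat card_diff_le_blocks.
by rewrite ler_wpM2l // (le_trans hblocks hnoise).
Qed.
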